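(* Consider the following two-stage game between Alice (A) and Bob (B). $X_1^A,X_1^B$ are independent and uniform on $\{-1,+1\}$; $X_2=X_1^B$. At stage 1 only Bob acts, choosing $U_1^B\in\{-1,+1\}$ knowing $H_1^B=X_1^B$ (Alice knows $H_1^A=X_1^A$). At stage 2 Alice and Bob act simultaneously, choosing $U_2^A,U_2^B\in\{-1,0,+1\}$, with information $H_2^A=(X_1^A,U_1^B)$ and $H_2^B=(X_1^B,U_1^B)$. Rewards: $R_1^A=-1$ if $U_1^B=-1$ and $0$ otherwise; $R_2^A=1$ if $U_2^A=X_2$ or $U_2^A=0$, and $0$ otherwise; $R_1^B=0.2$ if $U_1^B=-1$ and $0$ otherwise; $R_2^B=-1$ if $U_2^A=U_2^B$ and $0$ otherwise; total payoffs are $R_1^i+R_2^i$. Let $K_1^A=X_1^A$, $K_2^A=U_1^B$, and $K_t^B=H_t^B$ for $t=1,2$. Then the set of expected payoff profiles of weak perfect Bayesian equilibria whose strategy profile is $K$-based (i.e. Alice's stage-2 mixed action depends only on $U_1^B$) is a proper subset of the set of expected payoff profiles of all weak perfect Bayesian equilibria.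
   Context: A behavioral strategy of a player maps each of that player's information realizations to a distribution over actions. An assessment $(g,\mu)$ consists of a behavioral strategy profile $g$ and a belief system $\mu$ assigning to each information set of each player a probability distribution over the nodes (complete histories of moves of nature and players) in that information set. $(g,\mu)$ is a weak perfect Bayesian equilibrium (wPBE) if (i) $g$ is sequentially rational given $\mu$: at every information set of every player, the player's continuation strategy maximizes their expected continuation payoff computed with belief $\mu$ over nodes and the others' strategies $g$; and (ii) at every information set reached with positive probability under $g$, $\mu$ is obtained from $g$ by Bayes' rule (no restriction off the equilibrium path). *)

From HB Require Import structures.
From mathcomp Require Import all_boot all_order all_algebra.
From mathcomp Require Import reals.
Set Implicit Arguments. Unset Strict Implicit. Unset Printing Implicit Defensive.
Import Order.TTheory GRing.Theory Num.Theory.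
Local Open Scope ring_scope.

(* Values in {-1,+1}: Mn = -1, Pl = +1. *)
Inductive pm := Mn | Pl.
Definition pm_to_bool (p : pm) : bool := if p is Pl then true else false.
Definition bool_to_pm (b : bool) : pm := if b then Pl else Mn.
Lemma pm_to_boolK : cancel pm_to_bool bool_to_pm. Proof. by case. Qed.
HB.instance Definition _ := Equality.copy pm (can_type pm_to_boolK).
HB.instance Definition _ := Choice.copy pm (can_type pm_to_boolK).
HB.instance Definition _ := Countable.copy pm (can_type pm_to_boolK).
HB.instance Definition _ := Finite.copy pm (can_type pm_to_boolK).

(* Stage-2 actions in {-1,0,+1}: Am = -1, A0 = 0, Ap = +1. *)
Inductive act := Am | A0 | Ap.
Definition act_to_opt (a : act) : option bool :=
  match a with Am => Some false | A0 => None | Ap => Some true end.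
Definition opt_to_act (o : option bool) : act :=
  match o with Some false => Am | None => A0 | Some true => Ap end.
Lemma act_to_optK : cancel act_to_opt opt_to_act. Proof. by case. Qed.
HB.instance Definition _ := Equality.copy act (can_type act_to_optK).
HB.instance Definition _ := Choice.copy act (can_type act_to_optK).
HB.instance Definition _ := Countable.copy act (can_type act_to_optK).
HB.instance Definition _ := Finite.copy act (can_type act_to_optK).

Definition act_of_pm (p : pm) : act := if p is Pl then Ap else Am.

Section Game.
Variable R : realType.

Definition is_dist (T : finType) (p : T -> R) : Prop :=
  (forall t, 0 <= p t) /\ \sum_(t : T) p t = 1.

Definition prior (x1A x1B : pm) : R := 2^-1 * 2^-1.

Definition rA1 (u1B : pm) : R := if u1B == Mn then -1 else 0.
Definition rA2 (x2 : pm) (u2A : act) : R :=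
  if (u2A == act_of_pm x2) || (u2A == A0) then 1 else 0.
Definition rB1 (u1B : pm) : R := if u1B == Mn then 5^-1 else 0.
Definition rB2 (u2A u2B : act) : R := if u2A == u2B then -1 else 0.

Definition payA (x1A x1B u1B : pm) (u2A u2B : act) : R := rA1 u1B + rA2 x1B u2A.
Definition payB (x1A x1B u1B : pm) (u2A u2B : act) : R := rB1 u1B + rB2 u2A u2B.

(* Behavioral strategy profile:
   sB1 x1B u1B   = prob. Bob plays U1B = u1B at stage 1 given H1B = x1B;
   sA2 x1A u1B a = prob. Alice plays U2A = a given H2A = (x1A, u1B);
   sB2 x1B u1B b = prob. Bob plays U2B = b given H2B = (x1B, u1B).
   (Alice has no move at stage 1.) *)
Record profile := Profile {
  sB1 : pm -> pm -> R;
  sA2 : pm -> pm -> act -> R;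
  sB2 : pm -> pm -> act -> R }.

Definition valid_profile (g : profile) : Prop :=
  (forall x1B, is_dist (sB1 g x1B)) /\
  (forall x1A u1B, is_dist (sA2 g x1A u1B)) /\
  (forall x1B u1B, is_dist (sB2 g x1B u1B)).

(* A node of an information set is a complete history; inside
   a given information set the known components are fixed, so the belief is a
   distribution over the remaining (unknown) component:
   muB1 x1B x1A     : Bob's stage-1 info set H1B = x1B, nodes (x1A, x1B);
   muA2 x1A u1B x1B : Alice's stage-2 info set (x1A,u1B), nodes (x1A,x1B,u1B);
   muB2 x1B u1B x1A : Bob's stage-2 info set (x1B,u1B), nodes (x1A,x1B,u1B). *)
Record beliefs := Beliefs {
  muB1 : pm -> pm -> R;
  muA2 : pm -> pm -> pm -> R;
  muB2 : pm -> pm -> pm -> R }.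

Definition valid_beliefs (mu : beliefs) : Prop :=
  (forall x1B, is_dist (muB1 mu x1B)) /\
  (forall x1A u1B, is_dist (muA2 mu x1A u1B)) /\
  (forall x1B u1B, is_dist (muB2 mu x1B u1B)).

Definition cont2A (x1A x1B u1B : pm) (pA pB : act -> R) : R :=
  \sum_(a : act) \sum_(b : act) pA a * pB b * payA x1A x1B u1B a b.
Definition cont2B (x1A x1B u1B : pm) (pA pB : act -> R) : R :=
  \sum_(a : act) \sum_(b : act) pA a * pB b * payB x1A x1B u1B a b.

Definition expA (g : profile) : R :=
  \sum_(x1A : pm) \sum_(x1B : pm) prior x1A x1B *
    \sum_(u : pm) sB1 g x1B u * cont2A x1A x1B u (sA2 g x1A u) (sB2 g x1B u).
Definition expB (g : profile) : R :=
  \sum_(x1A : pm) \sum_(x1B : pm) prior x1A x1B *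
    \sum_(u : pm) sB1 g x1B u * cont2B x1A x1B u (sA2 g x1A u) (sB2 g x1B u).

Definition payoff_profile (g : profile) : R * R := (expA g, expB g).

Definition seqrat_A2 (g : profile) (mu : beliefs) : Prop :=
  forall x1A u1B (d : act -> R), is_dist d ->
    \sum_(x1B : pm) muA2 mu x1A u1B x1B * cont2A x1A x1B u1B d (sB2 g x1B u1B)
    <= \sum_(x1B : pm) muA2 mu x1A u1B x1B *
         cont2A x1A x1B u1B (sA2 g x1A u1B) (sB2 g x1B u1B).

Definition seqrat_B2 (g : profile) (mu : beliefs) : Prop :=
  forall x1B u1B (d : act -> R), is_dist d ->
    \sum_(x1A : pm) muB2 mu x1B u1B x1A * cont2B x1A x1B u1B (sA2 g x1A u1B) d
    <= \sum_(x1A : pm) muB2 mu x1B u1B x1A *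
         cont2B x1A x1B u1B (sA2 g x1A u1B) (sB2 g x1B u1B).

(* at his stage-1 information set, Bob's continuation strategy consists of his
   stage-1 mixed action d1 and his stage-2 behavior h at the succeeding
   information sets (x1B, u1B) *)
Definition seqrat_B1 (g : profile) (mu : beliefs) : Prop :=
  forall x1B (d1 : pm -> R) (h : pm -> act -> R),
    is_dist d1 -> (forall u, is_dist (h u)) ->
    \sum_(x1A : pm) muB1 mu x1B x1A *
      \sum_(u : pm) d1 u * cont2B x1A x1B u (sA2 g x1A u) (h u)
    <= \sum_(x1A : pm) muB1 mu x1B x1A *
      \sum_(u : pm) sB1 g x1B u * cont2B x1A x1B u (sA2 g x1A u) (sB2 g x1B u).

Definition reach2 (g : profile) (x1A x1B u1B : pm) : R :=
  prior x1A x1B * sB1 g x1B u1B.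

Definition bayes (g : profile) (mu : beliefs) : Prop :=
  (forall x1B x1A, 0 < \sum_(y : pm) prior y x1B ->
     muB1 mu x1B x1A = prior x1A x1B / \sum_(y : pm) prior y x1B) /\
  (forall x1A u1B x1B, 0 < \sum_(y : pm) reach2 g x1A y u1B ->
     muA2 mu x1A u1B x1B = reach2 g x1A x1B u1B / \sum_(y : pm) reach2 g x1A y u1B) /\
  (forall x1B u1B x1A, 0 < \sum_(y : pm) reach2 g y x1B u1B ->
     muB2 mu x1B u1B x1A = reach2 g x1A x1B u1B / \sum_(y : pm) reach2 g y x1B u1B).

Definition wPBE (g : profile) (mu : beliefs) : Prop :=
  [/\ valid_profile g, valid_beliefs mu,
      seqrat_A2 g mu /\ seqrat_B2 g mu /\ seqrat_B1 g mu & bayes g mu].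

(* K-based: K_1^A = X1A (Alice has no stage-1 move), K_2^A = U1B, K_t^B = H_t^B.
   Only restriction: Alice's stage-2 mixed action depends only on U1B. *)
Definition K_based (g : profile) : Prop :=
  forall x1A x1A' u1B (a : act), sA2 g x1A u1B a = sA2 g x1A' u1B a.

Definition wPBE_payoffs (v : R * R) : Prop :=
  exists g mu, wPBE g mu /\ payoff_profile g = v.
Definition K_wPBE_payoffs (v : R * R) : Prop :=
  exists g mu, wPBE g mu /\ K_based g /\ payoff_profile g = v.

End Game.

Definition proper_subset (T : Type) (A B : T -> Prop) : Prop :=
  (forall v, A v -> B v) /\ exists v, B v /\ ~ A v.

(* Whatever Alice believes after the off-path signal U1B = -1, playing 0 earns her 0 while
   guessing X2 costs her the probability that the guess is wrong; hence sequential rationality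
   forbids at least one of the two guesses.  If her stage-2 strategy ignores X1A, that guess is
   forbidden for both of her types, so by signalling -1 and then playing it Bob secures 0.2 > 0,
   and every type of Bob signals -1.  Then Alice earns at most 0, so the payoff profile (1, 0)
   is not attained by a K-based equilibrium.  It is attained by an equilibrium in which, after
   the signal -1, Alice believes X2 = X1A and mixes 0 with the guess X1A: averaged over X1A, each
   of Bob's replies is matched with probability 1/3 > 0.2, which deters the signal. *)

From mathcomp Require Import all_boot all_order all_algebra.
From mathcomp Require Import reals.
From mathcomp Require Import ring lra.
Set Implicit Arguments. Unset Strict Implicit. Unset Printing Implicit Defensive.
Import Order.TTheory GRing.Theory Num.Theory.
Local Open Scope ring_scope.

Lemma sum_pm (V : nmodType) (F : pm -> V) : \sum_(t : pm) F t = F Mn + F Pl.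
Proof.
rewrite (perm_big [:: Mn; Pl]) /=; last first.
  by apply: uniq_perm => //; [exact: index_enum_uniq | case; rewrite mem_index_enum].
by rewrite !big_cons big_nil addr0.
Qed.

Lemma sum_act (V : nmodType) (F : act -> V) :
  \sum_(t : act) F t = F Am + F A0 + F Ap.
Proof.
rewrite (perm_big [:: Am; A0; Ap]) /=; last first.
  by apply: uniq_perm => //; [exact: index_enum_uniq | case; rewrite mem_index_enum].
by rewrite !big_cons big_nil addr0 addrA.
Qed.

Section Distributions.
Variable R : realType.

Definition dirac (T : eqType) (t0 : T) : T -> R := fun t => (t == t0)%:R.

Lemma dirac_dist (T : finType) (t0 : T) : is_dist (dirac t0).
Proof.
split=> [t|]; first exact: ler0n.
by rewrite /dirac (bigD1 t0) //= eqxx big1 ?addr0 // => t /negbTE ->.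
Qed.

Lemma expect_dirac (T : finType) (t0 : T) (f : T -> R) : \sum_t dirac t0 t * f t = f t0.
Proof.
by rewrite (bigD1 t0) //= /dirac eqxx mul1r big1 ?addr0 // => t /negbTE ->; rewrite mul0r.
Qed.

Lemma expect_cst (T : finType) (p : T -> R) c : is_dist p -> \sum_t p t * c = c.
Proof. by move=> [_ p1]; rewrite -mulr_suml p1 mul1r. Qed.

Lemma expect_cstB (T : finType) (p f : T -> R) c :
  is_dist p -> \sum_t p t * (c - f t) = c - \sum_t p t * f t.
Proof.
move=> pd; under eq_bigr do rewrite mulrBr.
by rewrite sumrB expect_cst.
Qed.

Lemma expect_le (T : finType) (p f : T -> R) M :
  is_dist p -> (forall t, f t <= M) -> \sum_t p t * f t <= M.
Proof.
move=> pd fM; rewrite -[leRHS](expect_cst M pd).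
by apply: ler_sum => t _; apply: ler_wpM2l; [case: pd|].
Qed.

Lemma expect2_le (T T' : finType) (p : T -> R) (q : T' -> R) f M :
  is_dist p -> is_dist q -> (forall t t', f t t' <= M) ->
  \sum_t \sum_t' p t * q t' * f t t' <= M.
Proof.
move=> pd qd fM; under eq_bigr do under eq_bigr do rewrite -mulrA.
under eq_bigr do rewrite -mulr_sumr.
by apply: (expect_le pd) => t; apply: (expect_le qd).
Qed.

End Distributions.

Arguments dirac {R T}.
Arguments dirac_dist {R T}.

Section Game.
Variable R : realType.
Implicit Types (g : profile R) (mu : beliefs R) (pA pB d : act -> R).

Lemma rB2E a b : rB2 R a b = - dirac a b.
Proof. by rewrite /rB2 /dirac eq_sym; case: eqP; rewrite ?oppr0. Qed.

Lemma cont2A_E x1A x1B u pA pB : is_dist pB ->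
  cont2A x1A x1B u pA pB = \sum_a pA a * (rA1 R u + rA2 R x1B a).
Proof.
move=> pBd; apply: eq_bigr => a _.
under eq_bigr do rewrite -mulrA.
by rewrite -mulr_sumr expect_cst.
Qed.

Lemma cont2B_E x1A x1B u pA pB : is_dist pA -> is_dist pB ->
  cont2B x1A x1B u pA pB = rB1 R u - \sum_a pA a * pB a.
Proof.
move=> pAd pBd; rewrite -expect_cstB //; apply: eq_bigr => a _.
under eq_bigr do rewrite -mulrA /payB rB2E.
rewrite -mulr_sumr expect_cstB //.
by under eq_bigr do rewrite mulrC; rewrite expect_dirac.
Qed.

Lemma cont2B_dirac x1A x1B u pA b : is_dist pA ->
  cont2B x1A x1B u pA (dirac b) = rB1 R u - pA b.
Proof.
move=> pAd; rewrite cont2B_E //; last exact: dirac_dist.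
by under eq_bigr do rewrite mulrC; rewrite expect_dirac.
Qed.

Lemma cont2A_le x1A x1B u pA pB : is_dist pA -> is_dist pB ->
  cont2A x1A x1B u pA pB <= rA1 R u + 1.
Proof.
move=> pAd pBd; apply: expect2_le => // a b.
by rewrite /payA lerD2l /rA2; case: ifP.
Qed.

Lemma cont2B_le x1A x1B u pA pB : is_dist pA -> is_dist pB ->
  cont2B x1A x1B u pA pB <= rB1 R u.
Proof.
move=> pAd pBd; apply: expect2_le => // a b.
by rewrite /payB gerDl /rB2; case: ifP; rewrite ?lerN10.
Qed.

Lemma expA_le g : valid_profile g ->
  expA g <= 1 - 2^-1 * (sB1 g Mn Mn + sB1 g Pl Mn).
Proof.
move=> [vB1 [vA2 vB2]].
apply: (@le_trans _ _ (\sum_x1A \sum_x1B prior R x1A x1B *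
                        \sum_u sB1 g x1B u * (rA1 R u + 1))).
  apply: ler_sum => x1A _; apply: ler_sum => x1B _.
  apply: ler_wpM2l; first by rewrite /prior; lra.
  apply: ler_sum => u _; apply: ler_wpM2l; first by case: (vB1 x1B).
  exact: cont2A_le.
have [_ sMn1] := vB1 Mn; have [_ sPl1] := vB1 Pl.
by move: sMn1 sPl1; rewrite !sum_pm /prior /rA1 /=; lra.
Qed.

Lemma expA1_sB1_Mn g x1B : valid_profile g -> expA g = 1 -> sB1 g x1B Mn = 0.
Proof.
move=> vg expA1; have := expA_le vg; rewrite expA1.
have [[sMn0 _] [sPl0 _]] := (vg.1 Mn, vg.1 Pl).
by have := sMn0 Mn; have := sPl0 Mn; case: x1B; lra.
Qed.

Lemma expect_cont2A_Mn x1A (m : pm -> R) d (pB : pm -> act -> R) :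
  is_dist m -> is_dist d -> (forall x1B, is_dist (pB x1B)) ->
  \sum_x1B m x1B * cont2A x1A x1B Mn d (pB x1B) = - (d Am * m Pl + d Ap * m Mn).
Proof.
move=> [_ m1] [_ d1] pBd; under eq_bigr => x1B _ do rewrite (cont2A_E _ _ _ _ (pBd x1B)).
move: m1 d1; rewrite !sum_pm !sum_act /rA1 /rA2 /= => m1 d1.
have -> : d A0 = 1 - d Am - d Ap by lra.
have -> : m Mn = 1 - m Pl by lra.
ring.
Qed.

(* Compared with the action 0, which earns 0, the guess [act_of_pm x] loses the believed
   probability that X2 <> x, and these two probabilities cannot both vanish. *)
Lemma seqrat_A2_unused_guess g mu x1A :
  valid_profile g -> valid_beliefs mu -> seqrat_A2 g mu ->
  exists x, sA2 g x1A Mn (act_of_pm x) = 0.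
Proof.
move=> [_ [vA2 vB2]] [_ [vmA2 _]] ratA.
have vB2Mn x1B := vB2 x1B Mn.
have dA0 : is_dist (@dirac R _ A0) := dirac_dist A0.
have := ratA x1A Mn _ dA0.
rewrite !expect_cont2A_Mn // /dirac /= => ratA0.
have [[q0 _] [m0 m1]] := (vA2 x1A Mn, vmA2 x1A Mn).
move: (sA2 g x1A Mn) (muA2 mu x1A Mn) q0 m0 m1 ratA0 => q m q0 m0 m1 ratA0.
have [qAm_mPl qAp_mMn] : q Am * m Pl = 0 /\ q Ap * m Mn = 0.
  by have := mulr_ge0 (q0 Am) (m0 Pl); have := mulr_ge0 (q0 Ap) (m0 Mn); lra.
have [mPl0 | mPl_neq0] := eqVneq (m Pl) 0.
  exists Pl; have mMn1 : m Mn = 1 by move: m1; rewrite sum_pm; lra.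
  by rewrite -qAp_mMn mMn1 mulr1.
exists Mn; apply/eqP; move/eqP: qAm_mPl.
by rewrite mulf_eq0 (negPf mPl_neq0) orbF.
Qed.

Lemma expect_cont2B_le g x1A x1B : valid_profile g ->
  \sum_u sB1 g x1B u * cont2B x1A x1B u (sA2 g x1A u) (sB2 g x1B u)
  <= 5^-1 * sB1 g x1B Mn.
Proof.
move=> [vB1 [vA2 vB2]].
apply: (@le_trans _ _ (\sum_u sB1 g x1B u * rB1 R u)).
  apply: ler_sum => u _; apply: ler_wpM2l; first by case: (vB1 x1B).
  exact: cont2B_le.
by rewrite sum_pm /rB1 /=; lra.
Qed.

Lemma seqrat_B1_safe_reply g mu b x1B :
  valid_profile g -> valid_beliefs mu -> seqrat_B1 g mu ->
  (forall x1A, sA2 g x1A Mn b = 0) -> sB1 g x1B Mn = 1.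
Proof.
move=> vg [vmB1 _] ratB safe.
have := ratB x1B _ _ (dirac_dist Mn) (fun=> dirac_dist b).
have dev x1A : \sum_u dirac Mn u * cont2B x1A x1B u (sA2 g x1A u) (dirac b) = 5^-1.
  by rewrite expect_dirac cont2B_dirac ?safe ?subr0 //; case: vg => _ [].
under eq_bigr do rewrite dev.
rewrite expect_cst // => dev_le.
have := le_trans dev_le (expect_le (vmB1 x1B) (fun x1A => expect_cont2B_le x1A x1B vg)).
have [s0 s1] := vg.1 x1B; move: s1; rewrite sum_pm.
by have := s0 Pl; lra.
Qed.

End Game.

Section Threat.
Variable R : realType.

Definition threat_profile : profile R := Profile
  (fun _ => dirac Pl)
  (fun x1A u a => if u == Pl then dirac A0 a
                  else 3^-1 * dirac A0 a + 2 * 3^-1 * dirac (act_of_pm x1A) a)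
  (fun _ _ => dirac Ap).

Definition threat_beliefs : beliefs R := Beliefs
  (fun _ _ => 2^-1)
  (fun x1A u => if u == Pl then fun=> 2^-1 else dirac x1A)
  (fun _ _ _ => 2^-1).

Lemma threat_valid_profile : valid_profile threat_profile.
Proof.
split=> [x|]; first exact: dirac_dist.
split=> x u; last exact: dirac_dist.
split; first by move=> t; case: x; case: u; case: t; rewrite /= /dirac /=; lra.
by rewrite sum_act; case: x; case: u; rewrite /= /dirac /=; lra.
Qed.

Lemma threat_valid_beliefs : valid_beliefs threat_beliefs.
Proof.
split; [|split].
- by move=> x; split=> [t|]; rewrite ?sum_pm /=; lra.
- move=> x []; first exact: dirac_dist.
  by split=> [t|]; rewrite ?sum_pm /=; lra.
- by move=> x u; split=> [t|]; rewrite ?sum_pm /=; lra.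
Qed.

Lemma threat_seqrat_A2 : seqrat_A2 threat_profile threat_beliefs.
Proof.
move=> x1A u d [d0 d1]; move: d1.
rewrite /cont2A /payA /rA1 /rA2 !sum_pm !sum_act => d1.
have := d0 Am; have := d0 A0; have := d0 Ap.
by case: x1A; case: u; rewrite /= /dirac /=; lra.
Qed.

Lemma threat_seqrat_B2 : seqrat_B2 threat_profile threat_beliefs.
Proof.
move=> x1B u d [d0 d1]; move: d1.
rewrite /cont2B /payB /rB1 /rB2 !sum_pm !sum_act => d1.
have := d0 Am; have := d0 A0; have := d0 Ap.
by case: x1B; case: u; rewrite /= /dirac /=; lra.
Qed.

Lemma threat_seqrat_B1 : seqrat_B1 threat_profile threat_beliefs.
Proof.
move=> x1B d1 h [d0 _] hd.
have [_ [vA2 _]] := threat_valid_profile.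
have deterred u :
    \sum_x1A 2^-1 * cont2B x1A x1B u (sA2 threat_profile x1A u) (h u) <= 0.
  have [h0 h1] := hd u; move: h1.
  rewrite sum_pm !cont2B_E // !sum_act.
  have := h0 Am; have := h0 A0; have := h0 Ap; move: h0 => _.
  by case: u; rewrite /= /dirac /rB1 /=; lra.
rewrite [leRHS](_ : _ = 0); last first.
  by rewrite /cont2B /payB /rB1 /rB2 !sum_pm !sum_act /= /dirac /=; lra.
have := deterred Mn; have := deterred Pl; rewrite !sum_pm /=.
by have := d0 Mn; have := d0 Pl; nra.
Qed.

Lemma threat_bayes : bayes threat_profile threat_beliefs.
Proof.
have uniform_posterior : (2^-1 * 2^-1 / (2^-1 * 2^-1 + 2^-1 * 2^-1) : R) = 2^-1.
  by field.
rewrite /bayes /reach2 /prior.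
by split; [|split] => x [] y /=; rewrite ?sum_pm /dirac /= ?mulr1 ?mulr0 ?addr0 ?ltxx.
Qed.

Lemma threat_wPBE : wPBE threat_profile threat_beliefs.
Proof.
split; [exact: threat_valid_profile | exact: threat_valid_beliefs | | exact: threat_bayes].
by split; [exact: threat_seqrat_A2 | split; [exact: threat_seqrat_B2 | exact: threat_seqrat_B1]].
Qed.

Lemma threat_payoffs : payoff_profile threat_profile = (1, 0).
Proof.
rewrite /payoff_profile /expA /expB /cont2A /cont2B /payA /payB /rA1 /rA2 /rB1 /rB2.
by rewrite /prior !sum_pm !sum_act /= /dirac /=; congr pair; lra.
Qed.

End Threat.

Theorem proposition1 (R : realType) :
  proper_subset (@K_wPBE_payoffs R) (@wPBE_payoffs R).
Proof.
split; first by move=> v [g [mu [eqm [_ <-]]]]; exists g, mu.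
exists (1, 0); split.
  by exists (threat_profile R), (threat_beliefs R); split; [exact: threat_wPBE | exact: threat_payoffs].
move=> [g [mu [[vg vmu [ratA2 [_ ratB1]] _] [Kg [expA1 _]]]]].
have [x unused] := seqrat_A2_unused_guess Pl vg vmu ratA2.
have safe x1A : sA2 g x1A Mn (act_of_pm x) = 0 by rewrite (Kg x1A Pl) unused.
have := seqrat_B1_safe_reply Pl vg vmu ratB1 safe.
by rewrite (expA1_sB1_Mn Pl vg expA1) => /esym/eqP; rewrite oner_eq0.
Qed.
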